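(* Let $n\ge 2$ and let $G$ be a subgroup of $\mathrm{Sp}(n,1)$ containing $I_{n-2}\oplus c_1$, $I_{n-2}\oplus c_2$ and $I_{n-2}\oplus c_3$, where $c_1=\mathrm{diag}(1,i,-i)$, $c_2=\mathrm{diag}(i,1,-i)$, $c_3=\mathrm{diag}(i,-i,1)$. Then for every $g\in\mathrm{Sp}(n,1)$, the set of traces of the elements of $gGg^{-1}$ is not contained in $\mathbb R$.
   Context: $\mathbb H$ denotes the quaternions, with units $i,j,k$. $\mathrm{Sp}(n,1)=\{A\in\mathrm{GL}(n+1,\mathbb H): A^*I_{n,1}A=I_{n,1}\}$ with $A^*$ the conjugate transpose and $I_{n,1}=\mathrm{diag}(1,\dots,1,-1)$. $I_{n-2}\oplus c$ denotes the block diagonal matrix with the $(n-2)\times(n-2)$ identity in the upper left block and the $3\times 3$ matrix $c$ in the lower right block. The trace of a quaternionic matrix is the sum of its diagonal entries. *)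

From HB Require Import structures.
From mathcomp Require Import all_boot all_order all_algebra.
From mathcomp Require Import ring.
From mathcomp Require Import reals.
Set Implicit Arguments. Unset Strict Implicit. Unset Printing Implicit Defensive.
Import Order.TTheory GRing.Theory Num.Theory.
Local Open Scope ring_scope.

Section Quaternions.
Variable R : realFieldType.

Record quat := Quat { q0 : R; q1 : R; q2 : R; q3 : R }.

Definition quat_to_seq (x : quat) := [:: q0 x; q1 x; q2 x; q3 x].
Definition seq_to_quat (s : seq R) :=
  if s is [:: a; b; c; d] then Some (Quat a b c d) else None.
Lemma quat_to_seqK : pcancel quat_to_seq seq_to_quat. Proof. by case. Qed.

HB.instance Definition _ := Equality.copy quat (pcan_type quat_to_seqK).
HB.instance Definition _ := Choice.copy quat (pcan_type quat_to_seqK).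

Definition qadd (x y : quat) :=
  Quat (q0 x + q0 y) (q1 x + q1 y) (q2 x + q2 y) (q3 x + q3 y).
Definition qopp (x : quat) := Quat (- q0 x) (- q1 x) (- q2 x) (- q3 x).
Definition qzero := Quat 0 0 0 0.

Lemma qaddA : associative qadd.
Proof. by move=> [a b c d] [e f g h] [i j k l]; rewrite /qadd /=; congr Quat; ring. Qed.
Lemma qaddC : commutative qadd.
Proof. by move=> [a b c d] [e f g h]; rewrite /qadd /=; congr Quat; ring. Qed.
Lemma qadd0 : left_id qzero qadd.
Proof. by move=> [a b c d]; rewrite /qadd /=; congr Quat; ring. Qed.
Lemma qaddN : left_inverse qzero qopp qadd.
Proof. by move=> [a b c d]; rewrite /qadd /=; congr Quat; ring. Qed.

HB.instance Definition _ := GRing.isZmodule.Build quat qaddA qaddC qadd0 qaddN.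

(* Hamilton product, i^2 = j^2 = k^2 = ijk = -1 *)
Definition qmul (x y : quat) :=
  let: Quat a1 b1 c1 d1 := x in let: Quat a2 b2 c2 d2 := y in
  Quat (a1 * a2 - b1 * b2 - c1 * c2 - d1 * d2)
       (a1 * b2 + b1 * a2 + c1 * d2 - d1 * c2)
       (a1 * c2 - b1 * d2 + c1 * a2 + d1 * b2)
       (a1 * d2 + b1 * c2 - c1 * b2 + d1 * a2).
Definition qone := Quat 1 0 0 0.

Lemma qmulA : associative qmul.
Proof. by move=> [a b c d] [e f g h] [i j k l] /=; congr Quat; ring. Qed.
Lemma qmul1 : left_id qone qmul.
Proof. by move=> [a b c d] /=; congr Quat; ring. Qed.
Lemma qmulr1 : right_id qone qmul.
Proof. by move=> [a b c d] /=; congr Quat; ring. Qed.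
Lemma qmulDl : left_distributive qmul qadd.
Proof. by move=> [a b c d] [e f g h] [i j k l] /=; rewrite /qadd /=; congr Quat; ring. Qed.
Lemma qmulDr : right_distributive qmul qadd.
Proof. by move=> [a b c d] [e f g h] [i j k l] /=; rewrite /qadd /=; congr Quat; ring. Qed.
Lemma qone_neq0 : qone != 0.
Proof. by apply/eqP => -[] /eqP; rewrite oner_eq0. Qed.

HB.instance Definition _ :=
  GRing.Zmodule_isNzRing.Build quat qmulA qmul1 qmulr1 qmulDl qmulDr qone_neq0.

Definition qi : quat := Quat 0 1 0 0.
Definition qj : quat := Quat 0 0 1 0.
Definition qk : quat := Quat 0 0 0 1.
Definition qofR (r : R) : quat := Quat r 0 0 0.

Definition qconj (x : quat) : quat := Quat (q0 x) (- q1 x) (- q2 x) (- q3 x).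

End Quaternions.

Definition qadj (R : realFieldType) (m n : nat) (A : 'M[quat R]_(m, n))
  : 'M[quat R]_(n, m) := (map_mx (@qconj R) A)^T.

Definition Inm1 (R : realFieldType) (n : nat) : 'M[quat R]_(n.+1) :=
  \matrix_(i, j) (if i == j then (if i == ord_max then -1 else 1) else 0).

Definition Sp_n1 (R : realFieldType) (n : nat) (A : 'M[quat R]_(n.+1)) : Prop :=
  qadj A *m Inm1 R n *m A = Inm1 R n.

(** I_{n-2} (+) c for a 3x3 matrix c, an (n+1)x(n+1) matrix (meaningful for n >= 2) *)
Definition blk3 (R : realFieldType) (n : nat) (c : 'M[quat R]_3) : 'M[quat R]_(n.+1) :=
  \matrix_(i, j)
    (if ((i < n - 2)%N || (j < n - 2)%N) then (i == j)%:R
     else c (inord (i - (n - 2))) (inord (j - (n - 2)))).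

Definition diag3 (R : realFieldType) (a b c : quat R) : 'M[quat R]_3 :=
  \matrix_(i, j) (if i == j then [:: a; b; c]`_i else 0).

Definition c1 (R : realFieldType) := diag3 1 (qi R) (- qi R).
Definition c2 (R : realFieldType) := diag3 (qi R) 1 (- qi R).
Definition c3 (R : realFieldType) := diag3 (qi R) (- qi R) 1.

(* Write D(A) = A - A^3.  The diagonal matrices c1, c2 and c1 c2 have entries in
   {1, i, -i, -1}, and D(c1 c2) - D(c1) - D(c2) = diag(0, ..., 0, 4i).  Traces being
   additive, tr(g diag(0, ..., 0, 4i) g^-1) is real as soon as all traces of gGg^-1 are.
   With x_p the last column of g and g^-1 = I_{n,1} g^* I_{n,1}, this trace equals
   4 (x_n i conj(x_n) - sum_{p<n} x_p i conj(x_p)).  As x i conj(x) is a pure quaternion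
   of norm |x|^2, the triangle inequality yields |x_n|^2 <= sum_{p<n} |x_p|^2, whereas
   the last diagonal entry of g^* I_{n,1} g = I_{n,1} reads
   sum_{p<n} |x_p|^2 - |x_n|^2 = -1. *)

From HB Require Import structures.
From mathcomp Require Import all_boot all_order all_algebra.
From mathcomp Require Import ring lra zify.
From mathcomp Require Import reals.
Set Implicit Arguments. Unset Strict Implicit. Unset Printing Implicit Defensive.
Import Order.TTheory GRing.Theory Num.Theory.
Local Open Scope ring_scope.

Section Quaternions.
Variable R : realFieldType.
Notation H := (quat R).
Implicit Types x y z : H.

Lemma quatP x y :
  q0 x = q0 y -> q1 x = q1 y -> q2 x = q2 y -> q3 x = q3 y -> x = y.
Proof. by case: x y => [a b c d] [e f g h] /= -> -> -> ->. Qed.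

HB.instance Definition _ := GRing.isZmodMorphism.Build H R (@q0 R) (fun _ _ => erefl).
HB.instance Definition _ := GRing.isZmodMorphism.Build H R (@q1 R) (fun _ _ => erefl).
HB.instance Definition _ := GRing.isZmodMorphism.Build H R (@q2 R) (fun _ _ => erefl).
HB.instance Definition _ := GRing.isZmodMorphism.Build H R (@q3 R) (fun _ _ => erefl).

Definition qreal : {pred H} := [pred x | [&& q1 x == 0, q2 x == 0 & q3 x == 0]].

Fact qreal_zmod_closed : zmod_closed qreal.
Proof.
split=> [|x y /and3P[/eqP x1 /eqP x2 /eqP x3] /and3P[/eqP y1 /eqP y2 /eqP y3]].
  by rewrite inE /= eqxx.
by rewrite inE /= x1 x2 x3 y1 y2 y3 subrr eqxx.
Qed.
HB.instance Definition _ := GRing.isZmodClosed.Build H qreal qreal_zmod_closed.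

Lemma qofR_qreal (r : R) : qofR r \in qreal.
Proof. by rewrite inE /= eqxx. Qed.

Lemma qrealMn x k : (x *+ k.+1 \in qreal) = (x \in qreal).
Proof. by rewrite !inE !raddfMn !mulrn_eq0. Qed.

Definition qnorm2 x := q0 x ^+ 2 + q1 x ^+ 2 + q2 x ^+ 2 + q3 x ^+ 2.

Lemma qnorm2_ge0 x : 0 <= qnorm2 x.
Proof. by rewrite /qnorm2 !addr_ge0 ?sqr_ge0. Qed.

Lemma q0_conjM x : q0 (qconj x * x) = qnorm2 x.
Proof. by case: x => a b c d; rewrite /qnorm2 /=; ring. Qed.

Definition qrot x := x * qi R * qconj x.

Definition imdot x y := q1 x * q1 y + q2 x * q2 y + q3 x * q3 y.

Lemma imdotBl x y z : imdot (x - y) z = imdot x z - imdot y z.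
Proof. by rewrite /imdot !raddfB /=; ring. Qed.

Lemma imdot_suml (I : Type) (r : seq I) (P : pred I) (F : I -> H) z :
  imdot (\sum_(i <- r | P i) F i) z = \sum_(i <- r | P i) imdot (F i) z.
Proof. by rewrite /imdot !raddf_sum !mulr_suml -!big_split. Qed.

Lemma imdot_qreal x z : x \in qreal -> imdot x z = 0.
Proof. by rewrite /imdot => /and3P[/eqP-> /eqP-> /eqP->]; rewrite !mul0r !addr0. Qed.

Lemma imdot_qrot_self x : imdot (qrot x) (qrot x) = qnorm2 x ^+ 2.
Proof. by case: x => a b c d; rewrite /imdot /qnorm2 /=; ring. Qed.

Lemma imdot_qrot_le x y : imdot (qrot x) (qrot y) <= qnorm2 x * qnorm2 y.
Proof.
case: x y => [a b c d] [e f g h]; rewrite /imdot /qnorm2 /= -subr_ge0.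
(* The two squares are the j- and k-components of [qconj x * y]. *)
set L := (X in 0 <= X).
have -> : L = 2 * ((a*g + b*h - c*e - d*f) ^+ 2 + (a*h - b*g + c*f - d*e) ^+ 2).
  by rewrite /L; ring.
by rewrite mulr_ge0 ?addr_ge0 ?sqr_ge0.
Qed.

Lemma qnorm2_le_sum_qrot (I : Type) (r : seq I) (P : pred I) (x : I -> H) y :
  qrot y - \sum_(i <- r | P i) qrot (x i) \in qreal ->
  qnorm2 y <= \sum_(i <- r | P i) qnorm2 (x i).
Proof.
move=> /(imdot_qreal (qrot y)); rewrite imdotBl imdot_suml => /eqP; rewrite subr_eq0.
rewrite imdot_qrot_self => /eqP sq_eq.
have sq_le : qnorm2 y ^+ 2 <= (\sum_(i <- r | P i) qnorm2 (x i)) * qnorm2 y.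
  by rewrite sq_eq mulr_suml; apply: ler_sum => i _; apply: imdot_qrot_le.
have := qnorm2_ge0 y; have : 0 <= \sum_(i <- r | P i) qnorm2 (x i).
  by apply: sumr_ge0 => i _; apply: qnorm2_ge0.
move: sq_le; rewrite expr2; nra.
Qed.
End Quaternions.
Arguments qreal {R}.

Section SpMatrices.
Variables (R : realFieldType) (n : nat).
Notation H := (quat R).
Notation M := 'M[H]_(n.+1).
Implicit Types g ginv : M.

Lemma Inm1_diag :
  Inm1 R n = diag_mx (\row_k (if k == ord_max then -1 else 1)).
Proof.
by apply/matrixP => i j; rewrite !mxE; case: eqVneq => [->|]; rewrite ?mulr1n ?mulr0n.
Qed.

Lemma Inm1_sqr : Inm1 R n *m Inm1 R n = 1%:M.
Proof.
rewrite Inm1_diag mulmx_diag -diag_const_mx; congr diag_mx.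
by apply/rowP => k; rewrite !mxE; case: ifP; rewrite ?mulrNN mulr1.
Qed.

Lemma Sp_n1_inv g ginv :
  Sp_n1 g -> g *m ginv = 1%:M -> ginv = Inm1 R n *m qadj g *m Inm1 R n.
Proof.
move=> g_Sp g_ginv.
by rewrite -[LHS]mul1mx -Inm1_sqr -{2}g_Sp !mulmxA -mulmxA g_ginv mulmx1.
Qed.

Lemma Sp_n1_inv_last_row g ginv : Sp_n1 g -> g *m ginv = 1%:M -> forall p,
  ginv ord_max p = if p == ord_max then qconj (g p ord_max) else - qconj (g p ord_max).
Proof.
move=> g_Sp g_ginv p; rewrite (Sp_n1_inv g_Sp g_ginv) Inm1_diag mul_mx_diag mul_diag_mx.
by rewrite !mxE eqxx mulN1r; case: ifP; rewrite ?mulrN1 ?opprK ?mulr1.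
Qed.

Lemma Sp_n1_last_col g : Sp_n1 g ->
  \sum_(p < n.+1 | p != ord_max) qnorm2 (g p ord_max) - qnorm2 (g ord_max ord_max) = -1.
Proof.
move=> /(congr1 (fun A : M => q0 (A ord_max ord_max))) e.
rewrite Inm1_diag mul_mx_diag !mxE eqxx mulr1n (bigD1 ord_max) // raddfD raddf_sum in e.
rewrite /= !mxE eqxx mulrN1 mulNr raddfN /= q0_conjM in e.
rewrite -e addrC; congr (_ + _).
by apply: eq_bigr => p /negPf p_neq; rewrite !mxE p_neq mulr1 q0_conjM.
Qed.

Lemma mxtrace_conj_last g ginv w : Sp_n1 g -> g *m ginv = 1%:M ->
  \tr (g *m diag_mx (\row_k (if k == ord_max then w else 0)) *m ginv) =
  g ord_max ord_max * w * qconj (g ord_max ord_max)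
  - \sum_(p < n.+1 | p != ord_max) g p ord_max * w * qconj (g p ord_max).
Proof.
move=> g_Sp g_ginv.
have diag_entry p : (g *m diag_mx (\row_k (if k == ord_max then w else 0)) *m ginv) p p
               = g p ord_max * w * ginv ord_max p.
  rewrite mxE (bigD1 ord_max) //= big1 ?addr0 => [|k /negPf k_neq].
    by rewrite mul_mx_diag !mxE eqxx.
  by rewrite mul_mx_diag !mxE k_neq mulr0 mul0r.
rewrite /mxtrace (eq_bigr _ (fun p _ => diag_entry p)) (bigD1 ord_max) // -sumrN.
rewrite (Sp_n1_inv_last_row g_Sp g_ginv) eqxx; congr (_ + _); apply: eq_bigr => p /negPf p_neq.
by rewrite (Sp_n1_inv_last_row g_Sp g_ginv) p_neq mulrN.
Qed.

Lemma blk3_diag3 (a b c : H) : (2 <= n)%N ->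
  blk3 n (diag3 a b c) =
  diag_mx (\row_k (if (k < n - 2)%N then 1 else [:: a; b; c]`_(k - (n - 2)))).
Proof.
move=> n_ge2; apply/matrixP => i j; rewrite !mxE.
have tail_lt3 (k : 'I_n.+1) : (k - (n - 2) < 3)%N by have := ltn_ord k; lia.
have [<-|ij_neq] := eqVneq i j; rewrite ?mulr1n ?mulr0n ?orbb.
  by case: ifP => // _; rewrite eqxx inordK.
case: ifP => [//|/negbT]; rewrite negb_or => /andP[i_ge j_ge].
case: eqP => // /(congr1 val); rewrite /= !inordK // => tail_eq.
by case/eqP: ij_neq; apply: ord_inj; lia.
Qed.

Definition cube_defect (A : M) := A - A *m A *m A.

Lemma cube_defect_diag (d : 'rV[H]_n.+1) :
  cube_defect (diag_mx d) = diag_mx (\row_k (d 0 k - d 0 k * d 0 k * d 0 k)).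
Proof.
rewrite /cube_defect !mulmx_diag -raddfB; congr diag_mx.
by apply/rowP => k; rewrite !mxE.
Qed.

(* [x - x^3] kills [1] and doubles [i] and [-i]: on the last three coordinates
   the left-hand side is [(2i, 2i, 0) - (0, 2i, -2i) - (2i, 0, -2i)]. *)
Lemma cube_defect_c1c2 : (2 <= n)%N ->
  cube_defect (blk3 n (c1 R) *m blk3 n (c2 R))
  - cube_defect (blk3 n (c1 R)) - cube_defect (blk3 n (c2 R)) =
  diag_mx (\row_k (if k == ord_max then qi R *+ 4 else 0)).
Proof.
move=> n_ge2; rewrite /c1 /c2 !blk3_diag3 // mulmx_diag !cube_defect_diag -!raddfB.
congr diag_mx; apply/rowP => k; rewrite !mxE.
have [k_head|k_tail] := ltnP k (n - 2).
  have -> : (k == ord_max) = false by apply/negbTE; rewrite -val_eqE /=; lia.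
  by rewrite !mulr1 !subrr.
have -> : (k == ord_max) = (k - (n - 2) == 2)%N.
  by rewrite -val_eqE /=; apply/eqP/eqP; lia.
have : (k - (n - 2) < 3)%N by have := ltn_ord k; lia.
by case: (k - (n - 2))%N => [|[|[|]]] // _; apply: quatP; rewrite /= ?raddfMn /=; ring.
Qed.
End SpMatrices.

Theorem proposition4p12 (R : realType) (n : nat) (hn : (2 <= n)%N)
  (G : 'M[quat R]_(n.+1) -> Prop)
  (G_Sp : forall A, G A -> Sp_n1 A)
  (G_1 : G 1%:M)
  (G_mul : forall A B, G A -> G B -> G (A *m B))
  (G_inv : forall A, G A -> exists B, G B /\ A *m B = 1%:M /\ B *m A = 1%:M)
  (G_c1 : G (blk3 n (c1 R)))
  (G_c2 : G (blk3 n (c2 R)))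
  (G_c3 : G (blk3 n (c3 R))) :
  forall g ginv : 'M[quat R]_(n.+1),
    Sp_n1 g -> g *m ginv = 1%:M -> ginv *m g = 1%:M ->
    ~ (forall A, G A -> exists r : R, \tr (g *m A *m ginv) = qofR r).
Proof.
move=> g ginv g_Sp g_ginv _ trG.
have trG_real A : G A -> \tr (g *m A *m ginv) \in qreal.
  by case/trG => r ->; apply: qofR_qreal.
have defect_real A : G A -> \tr (g *m cube_defect A *m ginv) \in qreal.
  move=> GA; rewrite /cube_defect mulmxBr mulmxBl raddfB rpredB ?trG_real //.
  exact: G_mul (G_mul _ _ GA GA) GA.
have E_real : \tr (g *m diag_mx (\row_k (if k == ord_max then qi R *+ 4 else 0)) *m ginv)
               \in qreal.
  rewrite -cube_defect_c1c2 // 2!mulmxBr 2!mulmxBl 2!(raddfB (@mxtrace _ _)).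
  by rewrite !rpredB ?defect_real //; apply: G_mul.
have rot_real : qrot (g ord_max ord_max)
                - \sum_(p < n.+1 | p != ord_max) qrot (g p ord_max) \in qreal.
  have := E_real; rewrite mxtrace_conj_last //.
  under eq_bigr do rewrite mulrnAr mulrnAl.
  by rewrite mulrnAr mulrnAl sumrMnl -mulrnBl qrealMn.
have := qnorm2_le_sum_qrot rot_real; have := Sp_n1_last_col g_Sp; lra.
Qed.
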